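(* Let $(X,\tau)$ be a topological space, $\mathcal{V}\in T(\tau)$, $\mathcal{B}=\mathcal{B}(\mathcal{V}_\omega)$, and let $U\in\mathcal{V}$ be a transitive entourage. Then $U(A)\in\mathcal{B}$ for every $A\subseteq X$.
   Context: Quasi-uniformities and quasi-proximities are in the sense of Fletcher–Lindgren. For a quasi-uniformity $\mathcal{V}$, $\delta(\mathcal{V})$ is the induced quasi-proximity; $\pi(\delta)$ is the set of quasi-uniformities inducing $\delta$, and $\mathcal{V}_\omega$ denotes the coarsest element of $\pi(\delta(\mathcal{V}))$ (it is totally bounded). $T(\tau)$ is the set of compatible transitive quasi-uniformities on $(X,\tau)$ (transitive = having a base of entourages $U$ with $U\circ U\subseteq U$). For $U\subseteq X\times X$ and $A\subseteq X$, $U(x)=\{y:(x,y)\in U\}$ and $U(A)=\bigcup_{a\in A}U(a)$. For $N\subseteq X$, $U_N=(N\times N)\cup((X\setminus N)\times X)$, and for a compatible quasi-uniformity $\mathcal{W}$, $\mathcal{B}(\mathcal{W})=\{N\in\tau:U_N\in\mathcal{W}\}$. *)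

From Stdlib Require Import Classical.

Definition set (X : Type) := X -> Prop.
Definition rel (X : Type) := X -> X -> Prop.

Definition is_topology {X : Type} (tau : set X -> Prop) : Prop :=
  tau (fun _ => False) /\ tau (fun _ => True) /\
  (forall F : set X -> Prop, (forall G, F G -> tau G) ->
     tau (fun x => exists G, F G /\ G x)) /\
  (forall G H, tau G -> tau H -> tau (fun x => G x /\ H x)).

(* composition U o V (for U o U the order convention is irrelevant) *)
Definition comp {X : Type} (U V : rel X) : rel X :=
  fun x z => exists y, V x y /\ U y z.

Definition subrel {X : Type} (U V : rel X) : Prop := forall x y, U x y -> V x y.

Definition image {X : Type} (U : rel X) (A : set X) : set X :=
  fun y => exists a, A a /\ U a y.

Definition quasi_uniformity {X : Type} (W : rel X -> Prop) : Prop :=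
  W (fun _ _ => True) /\
  (forall U V, W U -> subrel U V -> W V) /\
  (forall U V, W U -> W V -> W (fun x y => U x y /\ V x y)) /\
  (forall U, W U -> forall x, U x x) /\
  (forall U, W U -> exists V, W V /\ subrel (comp V V) U).

Definition qu_open {X : Type} (W : rel X -> Prop) (G : set X) : Prop :=
  forall x, G x -> exists U, W U /\ forall y, U x y -> G y.

Definition compatible {X : Type} (tau : set X -> Prop) (W : rel X -> Prop) : Prop :=
  forall G, tau G <-> qu_open W G.

Definition transitive_rel {X : Type} (U : rel X) : Prop := subrel (comp U U) U.

Definition transitive_qu {X : Type} (W : rel X -> Prop) : Prop :=
  forall U, W U -> exists V, W V /\ transitive_rel V /\ subrel V U.

Definition in_T {X : Type} (tau : set X -> Prop) (W : rel X -> Prop) : Prop :=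
  quasi_uniformity W /\ compatible tau W /\ transitive_qu W.

Definition delta {X : Type} (W : rel X -> Prop) (A B : set X) : Prop :=
  forall U, W U -> exists a b, A a /\ B b /\ U a b.

Definition in_pi {X : Type} (d : set X -> set X -> Prop) (W : rel X -> Prop) : Prop :=
  quasi_uniformity W /\ forall A B, delta W A B <-> d A B.

Definition is_V_omega {X : Type} (V W : rel X -> Prop) : Prop :=
  in_pi (delta V) W /\
  forall W', in_pi (delta V) W' -> forall U, W U -> W' U.

Definition U_N {X : Type} (N : set X) : rel X :=
  fun x y => (N x /\ N y) \/ ~ N x.

Definition Bset {X : Type} (tau : set X -> Prop) (W : rel X -> Prop) (N : set X) : Prop :=
  tau N /\ W (U_N N).

(* Call a set N "U-invariant" when U(N) is contained in N.  For
   a transitive entourage U, every image U(A) is U-invariant.  A U-invariant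
   set N with U in V is
   - open in tau(V), since U(x) is a neighbourhood of each x in N lying in N;
   - delta(V)-far from its complement X \ N, since U misses N x (X \ N).
   Since V_omega induces the same quasi-proximity delta(V), N is also
   delta(V_omega)-far from X \ N, i.e. some entourage W of V_omega misses
   N x (X \ N); then W is contained in U_N, and U_N belongs to V_omega by
   upward closure.  Together with compatibility of V with tau this gives
   U(A) in B(V_omega). *)
From Stdlib Require Import Classical.

Definition invariant {X : Type} (U : rel X) (N : set X) : Prop :=
  forall a b, N a -> U a b -> N b.

Lemma image_invariant {X : Type} (U : rel X) (A : set X) :
  transitive_rel U -> invariant U (image U A).
Proof.
  intros HtU a b [c [Hc Hca]] Hab.
  exists c. split; [exact Hc|].
  apply HtU. exists a. split; assumption.
Qed.

Lemma invariant_qu_open {X : Type} (W : rel X -> Prop) (U : rel X) (N : set X) :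
  W U -> invariant U N -> qu_open W N.
Proof.
  intros HU Hinv x Hx. exists U. split; [exact HU|].
  intros y Hy. exact (Hinv x y Hx Hy).
Qed.

Lemma invariant_far_from_complement {X : Type} (W : rel X -> Prop)
  (U : rel X) (N : set X) :
  W U -> invariant U N -> ~ delta W N (fun y => ~ N y).
Proof.
  intros HU Hinv Hd.
  destruct (Hd U HU) as [a [b [Ha [Hb Hab]]]].
  exact (Hb (Hinv a b Ha Hab)).
Qed.

Lemma far_from_complement_U_N {X : Type} (W : rel X -> Prop) (N : set X) :
  quasi_uniformity W -> ~ delta W N (fun y => ~ N y) -> W (U_N N).
Proof.
  intros [_ [Hup _]] Hfar.
  apply not_all_ex_not in Hfar as [E HE].
  apply imply_to_and in HE as [HEw Hmiss].
  apply (Hup E); [exact HEw|].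
  intros x y Hxy. unfold U_N.
  destruct (classic (N x)) as [Hx|Hx]; [left|right; exact Hx].
  split; [exact Hx|].
  apply NNPP. intros Hy. apply Hmiss. exists x, y. auto.
Qed.

Theorem lemma2p2 (X : Type) (tau : set X -> Prop) (V Vw : rel X -> Prop)
  (U : rel X) :
  is_topology tau ->
  in_T tau V ->
  is_V_omega V Vw ->
  V U -> transitive_rel U ->
  forall A : set X, Bset tau Vw (image U A).
Proof.
  intros _ [_ [Hcomp _]] [[HqW Hsame_delta] _] HU HtU A.
  pose proof (image_invariant U A HtU) as Hinv.
  split.
  - apply Hcomp. exact (invariant_qu_open V U _ HU Hinv).
  - apply far_from_complement_U_N; [exact HqW|].
    rewrite Hsame_delta.
    exact (invariant_far_from_complement V U _ HU Hinv).
Qed.
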